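(* Let $\mathcal{G}$ be a directed graph with finite vertex set $\mathcal{V}_\mathcal{G}$ (totally ordered), edge set $\mathcal{E}_\mathcal{G}$, no self-loops, and nonnegative adjacency matrix $\mathbf{A}$ (with $A_{uv}>0$ iff $(u,v)\in\mathcal{E}_\mathcal{G}$), and let $\tilde{\mathbf{g}}\in\mathbb{R}^{|\mathcal{V}_\mathcal{G}|}$. Let $\tilde{\mathcal{E}}_\mathcal{G}=\{(u,v):(u,v)\in\mathcal{E}_\mathcal{G}\text{ or }(v,u)\in\mathcal{E}_\mathcal{G}\}$ and $m=|\tilde{\mathcal{E}}_\mathcal{G}|/2$. Let $\boldsymbol{\alpha}\in[0,1]^m$ collect the variables $\alpha_{uv}$ for $(u,v)\in\tilde{\mathcal{E}}_\mathcal{G}$ with $u<v$, and set $\alpha_{vu}:=1-\alpha_{uv}$. Define $f_A:\mathbb{R}^m\to\mathbb{R}^{|\mathcal{V}_\mathcal{G}|}$ by $[f_A(\boldsymbol{\alpha})]_u=\sum_{v:(u,v)\in\tilde{\mathcal{E}}_\mathcal{G}}(A_{uv}\alpha_{uv}-A_{vu}\alpha_{vu})$ and $\Psi(\boldsymbol{\alpha})=\|f_A(\boldsymbol{\alpha})-\tilde{\mathbf{g}}\|_2^2$. Then: (a) $\min_{\|\mathbf{y}\|_2\le1}\big(Q_1^{(g)}(\mathbf{y})-\langle\mathbf{y},\tilde{\mathbf{g}}\rangle\big)=-\min_{\boldsymbol{\alpha}\in[0,1]^m}\|f_A(\boldsymbol{\alpha})-\tilde{\mathbf{g}}\|_2$,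 so that the dual problem is $\min_{\boldsymbol{\alpha}\in[0,1]^m}\Psi(\boldsymbol{\alpha})$; (b) if $\boldsymbol{\alpha}^*$ minimizes $\Psi$ over $[0,1]^m$ and $f_A(\boldsymbol{\alpha}^* )\neq\tilde{\mathbf{g}}$, then $\mathbf{y}^*=-\frac{f_A(\boldsymbol{\alpha}^* )-\tilde{\mathbf{g}}}{\|f_A(\boldsymbol{\alpha}^* )-\tilde{\mathbf{g}}\|_2}$ minimizes $Q_1^{(g)}(\mathbf{y})-\langle\mathbf{y},\tilde{\mathbf{g}}\rangle$ over $\|\mathbf{y}\|_2\le1$; (c) for all $\boldsymbol{\alpha},\boldsymbol{\beta}\in\mathbb{R}^m$, $\|\nabla\Psi(\boldsymbol{\alpha})-\nabla\Psi(\boldsymbol{\beta})\|_2\le L\|\boldsymbol{\alpha}-\boldsymbol{\beta}\|_2$ with $L=4\max_{u\in\mathcal{V}_\mathcal{G}}\sum_{v\in\mathcal{V}_\mathcal{G}}(A_{uv}+A_{vu})^2$.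
   Context: $Q_1^{(g)}(\mathbf{y})=\sum_{u,v\in\mathcal{V}_\mathcal{G}}A_{uv}\max\{y_u-y_v,0\}$ is the Lovász extension of the directed cut function $\mathrm{cut}_\mathcal{G}(\mathcal{S})=\sum_{u\in\mathcal{S},v\notin\mathcal{S}}A_{uv}$. The set $\tilde{\mathcal{E}}_\mathcal{G}$ consists of ordered pairs, so $(u,v)$ and $(v,u)$ are distinct elements. *)

From HB Require Import structures.
From mathcomp Require Import all_boot all_order all_algebra.
From mathcomp Require Import all_classical all_reals all_analysis.
Set Implicit Arguments. Unset Strict Implicit. Unset Printing Implicit Defensive.
Import Order.TTheory GRing.Theory Num.Theory.
Local Open Scope ring_scope.

Section Defs.
Variables (R : realType) (n : nat).
Implicit Types (A : 'M[R]_n) (y g : 'I_n -> R).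

Definition norm2 (T : finType) (x : T -> R) : R := Num.sqrt (\sum_i x i ^+ 2).
Definition inner (T : finType) (x y : T -> R) : R := \sum_i x i * y i.

Definition etilde A (u v : 'I_n) : bool := (0 < A u v) || (0 < A v u).

(* index set of the variables alpha: pairs (u,v) in E~ with u < v; m = #|EdgeIdx A| *)
Definition ekey A (p : 'I_n * 'I_n) : bool := (p.1 < p.2)%N && etilde A p.1 p.2.
Definition EdgeIdx A : Type := {p : 'I_n * 'I_n | ekey A p}.

Definition alpha_of A (al : EdgeIdx A -> R) (u v : 'I_n) : R :=
  if @insub _ (ekey A) (EdgeIdx A) (u, v) is Some e then al e
  else if @insub _ (ekey A) (EdgeIdx A) (v, u) is Some e then 1 - al e
  else 0.

Definition fA A (al : EdgeIdx A -> R) (u : 'I_n) : R :=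
  \sum_(v | etilde A u v) (A u v * alpha_of al u v - A v u * alpha_of al v u).

Definition Psi A g (al : EdgeIdx A -> R) : R :=
  norm2 (fun u => fA al u - g u) ^+ 2.

(* Lovasz extension of the directed cut function *)
Definition Q1 A y : R := \sum_u \sum_v A u v * Num.max (y u - y v) 0.

Definition in_cube (T : finType) (al : T -> R) : Prop := forall e, 0 <= al e <= 1.

Definition grad (T : finType) (F : (T -> R) -> R) (al : T -> R) : T -> R :=
  fun e => derive1 (fun t : R => F (fun e' => al e' + (if e' == e then t else 0))) 0.

Definition Lconst A : R := 4 * \big[Num.max/0]_u \sum_v (A u v + A v u) ^+ 2.

End Defs.
Arguments alpha_of {R n} A al u v.
Arguments fA {R n} A al u.
Arguments Psi {R n} A g al.

From HB Require Import structures.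
From mathcomp Require Import all_boot all_order all_algebra.
From mathcomp Require Import all_classical all_reals all_analysis.
From mathcomp Require Import ring lra.
Import Order.TTheory GRing.Theory Num.Theory.
Local Open Scope ring_scope.
Set Implicit Arguments. Unset Strict Implicit.

(* For y fixed, <y, f_A(alpha)> = sum_{u,v} A_uv alpha_uv (y_u - y_v), so Q1(y) is the maximum
   of <y, f_A(alpha)> over the cube (take alpha_uv = 1 exactly when y_u >= y_v), and by
   Cauchy-Schwarz Q1(y) - <y, g> >= -|y| |f_A(alpha) - g| for every alpha in the cube.
   A minimizer alpha0 of Psi exists by compactness; its first-order condition
   <f_A(alpha0) - g, f_A(alpha) - f_A(alpha0)> >= 0 on the cube shows that
   y0 = -(f_A(alpha0) - g) / |f_A(alpha0) - g| attains this lower bound, which gives (a) and (b).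
   For (c), f_A is affine with linear part L, grad Psi(alpha) = 2 L^T (f_A(alpha) - g), and
   |L|^2 <= 2 max_u sum_v (A_uv + A_vu)^2 by Cauchy-Schwarz, each variable entering f_A through
   alpha_uv and alpha_vu; hence grad Psi is 2|L|^2-Lipschitz. *)

Section RealFacts.
Variable R : realType.

Lemma quadratic_slope_ge0 (b c : R) :
  0 <= c -> (forall t, 0 <= t <= 1 -> 0 <= t * b + t ^+ 2 * c) -> 0 <= b.
Proof.
move=> c0 nonneg; rewrite leNgt; apply/negP => b0.
have k0 : 0 < c - b by lra.
set t := - b / (c - b).
have t0 : 0 < t by rewrite divr_gt0 // oppr_gt0.
have t1 : t <= 1 by rewrite ler_pdivrMr // mul1r; lra.
have := nonneg t; rewrite (ltW t0) t1 => /(_ isT).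
have -> : t * b + t ^+ 2 * c = - (t * (b ^+ 2 / (c - b))).
  by rewrite /t; field; rewrite gt_eqF.
have : 0 < t * (b ^+ 2 / (c - b)) by rewrite mulr_gt0 // divr_gt0 // exprn_even_gt0 // (lt_eqF b0).
lra.
Qed.

Lemma derive1_quadratic0 (a b c : R) :
  derive1 (fun t : R => a + t * b + t ^+ 2 * c) 0 = b.
Proof.
rewrite derive1E.
have D : is_derive (0 : R) 1 (fun t : R => a + t * b + t ^+ 2 * c) b.
  apply: is_derive_eq.
  rewrite expr0n /= !(scale0r, add0r, addr0, mul1r, scaler0).
  by rewrite /GRing.scale /= mulr1.
exact: derive_val.
Qed.

Lemma invr_mul_sqr (x : R) : x^-1 * x ^+ 2 = x.
Proof.
by have [->|x0] := eqVneq x 0; rewrite ?expr0n ?mulr0 // expr2 mulKf.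
Qed.

Lemma invr_mul_le1 (x : R) : x^-1 * x <= 1.
Proof. by have [->|x0] := eqVneq x 0; rewrite ?mulr0 ?ler01 // mulVf. Qed.

End RealFacts.

Section EuclideanNorm.
Variable R : realType.

Section OneSpace.
Variable T : finType.
Implicit Types x y z : T -> R.

Lemma sum_sqr_ge0 x : 0 <= \sum_i x i ^+ 2.
Proof. by apply: sumr_ge0 => i _; exact: sqr_ge0. Qed.

Lemma norm2_ge0 x : 0 <= norm2 x.
Proof. exact: sqrtr_ge0. Qed.

Lemma sqr_norm2 x : norm2 x ^+ 2 = \sum_i x i ^+ 2.
Proof. by rewrite /norm2 sqr_sqrtr // sum_sqr_ge0. Qed.

Lemma inner_self x : inner x x = norm2 x ^+ 2.
Proof. by rewrite sqr_norm2; apply: eq_bigr => i _; rewrite expr2. Qed.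

Lemma norm2_scale (k : R) x : norm2 (fun i => k * x i) = `|k| * norm2 x.
Proof.
rewrite /norm2 -sqrtr_sqr -sqrtrM ?sqr_ge0 // mulr_sumr.
by congr Num.sqrt; apply: eq_bigr => i _; rewrite exprMn.
Qed.

Lemma innerDr x y z : inner x (fun i => y i + z i) = inner x y + inner x z.
Proof. by rewrite /inner -big_split; apply: eq_bigr => i _; rewrite mulrDr. Qed.

Lemma innerBr x y z : inner x (fun i => y i - z i) = inner x y - inner x z.
Proof. by rewrite /inner -sumrB; apply: eq_bigr => i _; rewrite mulrBr. Qed.

Lemma innerZl (k : R) x y : inner (fun i => k * x i) y = k * inner x y.
Proof. by rewrite /inner mulr_sumr; apply: eq_bigr => i _; rewrite mulrA. Qed.

Lemma sum_mul_sqr_le x y :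
  (\sum_i x i * y i) ^+ 2 <= (\sum_i x i ^+ 2) * (\sum_i y i ^+ 2).
Proof.
(* Lagrange's identity: twice the gap is the sum of the squares (x_i y_j - x_j y_i)^2. *)
pose P i j := x i ^+ 2 * y j ^+ 2.
pose Q i j := x i * y i * (x j * y j).
have sqE i j : (x i * y j - x j * y i) ^+ 2 = P i j + P j i - 2 * Q i j.
  by rewrite /P /Q; ring.
have gapE : \sum_i \sum_j (x i * y j - x j * y i) ^+ 2 =
    2 * ((\sum_i x i ^+ 2) * (\sum_i y i ^+ 2) - (\sum_i x i * y i) ^+ 2).
  transitivity (\sum_i \sum_j P i j + \sum_i \sum_j P j i - 2 * \sum_i \sum_j Q i j).
    rewrite mulr_sumr -big_split -sumrB; apply: eq_bigr => i _.
    by rewrite mulr_sumr -big_split -sumrB; apply: eq_bigr => j _; rewrite sqE.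
  by rewrite [\sum_i \sum_j P j i]exchange_big expr2 !big_distrlr; ring.
have : 0 <= \sum_i \sum_j (x i * y j - x j * y i) ^+ 2.
  by apply: sumr_ge0 => i _; exact: sum_sqr_ge0.
by rewrite gapE pmulr_rge0 // subr_ge0.
Qed.

Lemma ler_norm_inner x y : `|inner x y| <= norm2 x * norm2 y.
Proof.
rewrite /norm2 -sqrtrM ?sum_sqr_ge0 // -sqrtr_sqr ler_sqrt ?mulr_ge0 ?sum_sqr_ge0 //.
exact: sum_mul_sqr_le.
Qed.

End OneSpace.

Lemma norm2_le_sqrt (I J : finType) (x : I -> R) (y : J -> R) (K : R) :
  0 <= K -> \sum_j y j ^+ 2 <= K * \sum_i x i ^+ 2 -> norm2 y <= Num.sqrt K * norm2 x.
Proof.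
by move=> K0 le; rewrite /norm2 -sqrtrM // ler_sqrt // mulr_ge0 // sum_sqr_ge0.
Qed.

Lemma norm2_adjoint_le (I J : finType) (L : (I -> R) -> J -> R)
    (Lt : (J -> R) -> I -> R) (c : R) :
  0 <= c -> (forall x d, inner (Lt x) d = inner x (L d)) ->
  (forall d, norm2 (L d) <= c * norm2 d) ->
  forall x, norm2 (Lt x) <= c * norm2 x.
Proof.
move=> c0 adj bound x; set N := norm2 (Lt x).
have N0 : 0 <= N := norm2_ge0 _.
have sqrN : N * N <= norm2 x * (c * N).
  rewrite -expr2 -inner_self adj; apply: le_trans (ler_norm _) _.
  apply: le_trans (ler_norm_inner _ _) _.
  by rewrite ler_wpM2l ?norm2_ge0 ?bound.
have [->|Nneq0] := eqVneq N 0; first by rewrite mulr_ge0 ?norm2_ge0.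
have Npos : 0 < N by rewrite lt_def Nneq0.
by rewrite -(ler_pM2r Npos); lra.
Qed.

End EuclideanNorm.

Section EdgeVariables.
Variables (R : realType) (n : nat) (A : 'M[R]_n).
Implicit Types (al be d : EdgeIdx A -> R) (u v : 'I_n).

Definition alpha_lin d u v : R :=
  if @insub _ (ekey A) (EdgeIdx A) (u, v) is Some e then d e
  else if @insub _ (ekey A) (EdgeIdx A) (v, u) is Some e then - d e
  else 0.

Definition fA_lin d u : R :=
  \sum_(v | etilde A u v) (A u v * alpha_lin d u v - A v u * alpha_lin d v u).

Definition edge_delta (e : EdgeIdx A) : EdgeIdx A -> R := fun e' => (e' == e)%:R.

Definition fA_adj (x : 'I_n -> R) (e : EdgeIdx A) : R := inner x (fA_lin (edge_delta e)).

Lemma ekey_asym u v : ekey A (u, v) -> ~~ ekey A (v, u).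
Proof. by case/andP=> /= lt_uv _; rewrite /ekey /= ltnNge (ltnW lt_uv). Qed.

Lemma alpha_of_add al d u v :
  alpha_of A (fun e => al e + d e) u v = alpha_of A al u v + alpha_lin d u v.
Proof.
rewrite /alpha_of /alpha_lin; case: insubP => [e _ _ //|_].
by case: insubP => [e _ _|_]; rewrite ?opprD ?addrA ?addr0.
Qed.

Lemma alpha_lin_anti d u v : alpha_lin d v u = - alpha_lin d u v.
Proof.
rewrite /alpha_lin; case: (insubP _ (u, v)) => [e kuv _|_].
  by rewrite insubF ?opprK // (negbTE (ekey_asym kuv)).
by case: insubP => [e _ _|_]; rewrite ?opprK ?oppr0.
Qed.

Lemma sum_edge_delta (x : EdgeIdx A -> R) e0 : \sum_e x e * edge_delta e e0 = x e0.
Proof.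
rewrite (bigD1 e0) //= /edge_delta eqxx mulr1 big1 ?addr0 // => e ne.
by rewrite eq_sym (negbTE ne) mulr0.
Qed.

Lemma alpha_lin_delta d u v : alpha_lin d u v = \sum_e d e * alpha_lin (edge_delta e) u v.
Proof.
rewrite /alpha_lin; case: insubP => [e0 _ _|_]; first by rewrite sum_edge_delta.
case: insubP => [e0 _ _|_]; last by rewrite big1 // => e _; rewrite mulr0.
by under eq_bigr do rewrite mulrN; rewrite sumrN sum_edge_delta.
Qed.

Lemma fA_add al d u : fA A (fun e => al e + d e) u = fA A al u + fA_lin d u.
Proof.
by rewrite /fA /fA_lin -big_split /=; apply: eq_bigr => v _; rewrite !alpha_of_add; ring.
Qed.

Lemma fA_sub al be u : fA A al u - fA A be u = fA_lin (fun e => al e - be e) u.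
Proof.
have al_split : al = (fun e => be e + (al e - be e)).
  by apply: funext => e; rewrite addrC subrK.
by rewrite {1}al_split fA_add addrC addKr.
Qed.

Lemma fA_lin_delta d u : fA_lin d u = \sum_e d e * fA_lin (edge_delta e) u.
Proof.
under [RHS]eq_bigr do rewrite mulr_sumr.
rewrite [RHS]exchange_big /=; apply: eq_bigr => v _.
by rewrite !(alpha_lin_delta d) !mulr_sumr -sumrB; apply: eq_bigr => e _; ring.
Qed.

Lemma fA_lin_scale (t : R) d u : fA_lin (fun e => t * d e) u = t * fA_lin d u.
Proof.
by rewrite fA_lin_delta (fA_lin_delta d) mulr_sumr; apply: eq_bigr => e _; rewrite mulrA.
Qed.

Lemma inner_fA_adj x d : inner (fA_adj x) d = inner x (fA_lin d).
Proof.
rewrite /inner /fA_adj; under [RHS]eq_bigr do rewrite fA_lin_delta mulr_sumr.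
rewrite [RHS]exchange_big /=; apply: eq_bigr => e _.
by rewrite /inner mulr_suml; apply: eq_bigr => u _; ring.
Qed.

Lemma fA_adjB x y e : fA_adj x e - fA_adj y e = fA_adj (fun u => x u - y u) e.
Proof.
by rewrite /fA_adj /inner -sumrB; apply: eq_bigr => u _; rewrite mulrBl.
Qed.

Definition edge_sqr d (p : 'I_n * 'I_n) : R :=
  if @insub _ (ekey A) (EdgeIdx A) p is Some e then d e ^+ 2 else 0.

Lemma sqr_alpha_lin d u v : alpha_lin d u v ^+ 2 = edge_sqr d (u, v) + edge_sqr d (v, u).
Proof.
rewrite /alpha_lin /edge_sqr; case: (insubP _ (u, v)) => [e kuv _|_].
  by rewrite insubF ?addr0 // (negbTE (ekey_asym kuv)).
by case: insubP => [e _ _|_]; rewrite ?sqrrN ?add0r ?expr0n.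
Qed.

Lemma sum_edge_sqr d : \sum_p edge_sqr d p = \sum_e d e ^+ 2.
Proof.
rewrite (bigID (ekey A)) /= [X in _ + X]big1 ?addr0 => [|p /negbTE kp]; last first.
  by rewrite /edge_sqr insubF.
rewrite (reindex_omap (val : EdgeIdx A -> 'I_n * 'I_n) insub) => [|p kp]; last first.
  by rewrite insubT.
by apply: eq_big => [e|e _]; rewrite /edge_sqr valK // (valP e) eqxx.
Qed.

Lemma sum_alpha_lin_sqr d : \sum_u \sum_v alpha_lin d u v ^+ 2 = 2 * \sum_e d e ^+ 2.
Proof.
under eq_bigr do under eq_bigr do rewrite sqr_alpha_lin.
under eq_bigr do rewrite big_split /=.
rewrite big_split /= [X in _ + X]exchange_big /= pair_bigA /=.
rewrite (eq_bigr (edge_sqr d)) => [|[]//]; rewrite sum_edge_sqr; ring.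
Qed.

Definition max_row_sqr : R := \big[Num.max/0]_u \sum_v (A u v + A v u) ^+ 2.

Lemma max_row_sqr_ge0 : 0 <= max_row_sqr.
Proof. exact: bigmax_ge_id. Qed.

Lemma row_sqr_le_max u : \sum_v (A u v + A v u) ^+ 2 <= max_row_sqr.
Proof. exact: (le_bigmax _ (fun u => \sum_v (A u v + A v u) ^+ 2)). Qed.

Hypothesis A_nonneg : forall u v, 0 <= A u v.

Lemma sum_etilde u (F : 'I_n -> R) :
  (forall v, A u v = 0 -> A v u = 0 -> F v = 0) ->
  \sum_(v | etilde A u v) F v = \sum_v F v.
Proof.
move=> F0; rewrite big_mkcond; apply: eq_bigr => v _.
case: ifPn => //; rewrite /etilde negb_or -!leNgt => /andP[uv vu].
by rewrite F0 //; apply/eqP; rewrite eq_le A_nonneg ?uv ?vu.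
Qed.

Lemma fA_lin_weighted d u : fA_lin d u = \sum_v (A u v + A v u) * alpha_lin d u v.
Proof.
rewrite /fA_lin sum_etilde => [|v -> ->]; last by rewrite !mul0r subrr.
by apply: eq_bigr => v _; rewrite alpha_lin_anti; ring.
Qed.

Lemma sum_fA_lin_sqr_le d :
  \sum_u fA_lin d u ^+ 2 <= 2 * max_row_sqr * \sum_e d e ^+ 2.
Proof.
apply: (@le_trans _ _ (\sum_u max_row_sqr * \sum_v alpha_lin d u v ^+ 2)).
  apply: ler_sum => u _; rewrite fA_lin_weighted.
  apply: le_trans (sum_mul_sqr_le _ _) _.
  by rewrite ler_wpM2r ?sum_sqr_ge0 ?row_sqr_le_max.
by rewrite -mulr_sumr sum_alpha_lin_sqr mulrCA mulrA.
Qed.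

Lemma norm2_fA_lin_le d :
  norm2 (fA_lin d) <= Num.sqrt (2 * max_row_sqr) * norm2 d.
Proof.
by apply: norm2_le_sqrt; rewrite ?mulr_ge0 ?max_row_sqr_ge0 ?sum_fA_lin_sqr_le.
Qed.

Lemma norm2_fA_adj_le x :
  norm2 (fA_adj x) <= Num.sqrt (2 * max_row_sqr) * norm2 x.
Proof.
apply: norm2_adjoint_le x; [exact: sqrtr_ge0 | exact: inner_fA_adj | exact: norm2_fA_lin_le].
Qed.


Variable g : 'I_n -> R.

Lemma Psi_line al d t :
  Psi A g (fun e => al e + t * d e) =
  Psi A g al + t * (2 * inner (fun u => fA A al u - g u) (fA_lin d))
    + t ^+ 2 * norm2 (fA_lin d) ^+ 2.
Proof.
rewrite /Psi !sqr_norm2 /inner !mulr_sumr -!big_split /=.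
by apply: eq_bigr => u _; rewrite fA_add fA_lin_scale; ring.
Qed.

Lemma grad_Psi al e : grad (Psi A g) al e = 2 * fA_adj (fun u => fA A al u - g u) e.
Proof.
rewrite /grad.
have shift t : (fun e' => al e' + (if e' == e then t else 0)) =
               (fun e' => al e' + t * edge_delta e e').
  by apply: funext => e'; rewrite /edge_delta; case: (e' == e); rewrite ?mulr1 ?mulr0.
under eq_fun do rewrite shift Psi_line.
by rewrite derive1_quadratic0.
Qed.

Lemma grad_Psi_lipschitz al be :
  norm2 (fun e => grad (Psi A g) al e - grad (Psi A g) be e)
    <= Lconst A * norm2 (fun e => al e - be e).
Proof.
set d := fun e => al e - be e; set c := Num.sqrt (2 * max_row_sqr).
have c0 : 0 <= c := sqrtr_ge0 _.
have -> : (fun e => grad (Psi A g) al e - grad (Psi A g) be e) =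
          (fun e => 2 * fA_adj (fA_lin d) e).
  apply: funext => e; rewrite !grad_Psi -mulrBr fA_adjB.
  by congr (2 * fA_adj _ e); apply: funext => u; rewrite opprB addrA subrK fA_sub.
have -> : Lconst A = 2 * c * c.
  by rewrite -mulrA -expr2 sqr_sqrtr ?mulr_ge0 ?max_row_sqr_ge0 // /Lconst -/max_row_sqr; ring.
rewrite norm2_scale ger0_norm // -!mulrA ler_wpM2l //.
apply: le_trans (norm2_fA_adj_le _) _.
by rewrite ler_wpM2l ?norm2_fA_lin_le.
Qed.


Lemma inner_fA y al :
  inner y (fA A al) = \sum_u \sum_v A u v * (alpha_of A al u v * (y u - y v)).
Proof.
have fAE u : fA A al u = \sum_v (A u v * alpha_of A al u v - A v u * alpha_of A al v u).
  by rewrite /fA sum_etilde // => v -> ->; rewrite !mul0r subrr.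
rewrite /inner; under eq_bigr do rewrite fAE mulr_sumr.
transitivity (\sum_u \sum_v y u * (A u v * alpha_of A al u v)
              - \sum_u \sum_v y v * (A u v * alpha_of A al u v)).
  rewrite [X in _ - X]exchange_big -sumrB; apply: eq_bigr => u _.
  by rewrite -sumrB; apply: eq_bigr => v _; ring.
by rewrite -sumrB; apply: eq_bigr => u _; rewrite -sumrB; apply: eq_bigr => v _; ring.
Qed.

Lemma alpha_of_cube al u v : in_cube al -> 0 <= alpha_of A al u v <= 1.
Proof.
move=> cube; rewrite /alpha_of; case: insubP => [e _ _|_]; first exact: cube.
case: insubP => [e _ _|_]; last by rewrite lexx ler01.
by have := cube e; rewrite subr_ge0 lerBlDr lerDl andbC.
Qed.

Lemma inner_fA_le_Q1 y al : in_cube al -> inner y (fA A al) <= Q1 A y.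
Proof.
move=> cube; rewrite inner_fA; apply: ler_sum => u _; apply: ler_sum => v _.
rewrite ler_wpM2l //; have /andP[a0 a1] := alpha_of_cube u v cube.
have [duv|duv] := lerP 0 (y u - y v).
  by rewrite ler_piMl.
by rewrite mulr_ge0_le0 // ltW.
Qed.

Lemma Q1_attained y : exists2 al, in_cube al & inner y (fA A al) = Q1 A y.
Proof.
pose al (e : EdgeIdx A) : R := if y (val e).2 <= y (val e).1 then 1 else 0.
exists al => [e|]; first by rewrite /al; case: ifP; rewrite ?lexx ?ler01.
rewrite inner_fA; apply: eq_bigr => u _; apply: eq_bigr => v _.
have [->|Auv] := eqVneq (A u v) 0; first by rewrite !mul0r.
congr (_ * _); rewrite /alpha_of /al.
case: insubP => [e _ -> /=|kuv].
  by case: leP => h /=; [rewrite mul1r max_l ?subr_ge0 | rewrite mul0r max_r // subr_le0 ltW].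
case: insubP => [e _ -> /=|kvu].
  case: leP => h /=; first by rewrite subrr mul0r max_r // subr_le0.
  by rewrite subr0 mul1r max_l // subr_ge0 ltW.
have /andP[Euv Evu] : etilde A u v && etilde A v u.
  by rewrite /etilde lt_def Auv A_nonneg orbT.
suff -> : u = v by rewrite subrr mulr0 maxxx.
move: kuv kvu; rewrite /ekey /= Euv Evu !andbT -!leqNgt => vu uv.
by apply/val_inj/eqP; rewrite eqn_leq uv vu.
Qed.

Lemma dual_lower_bound y al :
  in_cube al -> - (norm2 y * norm2 (fun u => fA A al u - g u)) <= Q1 A y - inner y g.
Proof.
move=> cube.
have /ler_normlP[lb _] := ler_norm_inner y (fun u => fA A al u - g u).
rewrite lerNl innerBr in lb; apply: le_trans lb _.
by rewrite lerD2r inner_fA_le_Q1.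
Qed.


Lemma Psi_min_variational als al :
  in_cube als -> (forall be, in_cube be -> Psi A g als <= Psi A g be) -> in_cube al ->
  0 <= inner (fun u => fA A als u - g u) (fun u => fA A al u - fA A als u).
Proof.
move=> cube_s min cube_a; set d := fun e => al e - als e.
have -> : (fun u => fA A al u - fA A als u) = fA_lin d.
  by apply: funext => u; rewrite fA_sub.
suff : 0 <= 2 * inner (fun u => fA A als u - g u) (fA_lin d) by lra.
apply: (quadratic_slope_ge0 (sqr_ge0 (norm2 (fA_lin d)))) => t /andP[t0 t1].
have cube_t : in_cube (fun e => als e + t * d e).
  move=> e; have /andP[s0 s1] := cube_s e; have /andP[a0 a1] := cube_a e.
  by rewrite /d; apply/andP; split; nra.
by have := min _ cube_t; rewrite Psi_line; lra.
Qed.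

(* When f_A(als) = g the division by zero makes this the point 0, which is still optimal. *)
Definition dual_point als : 'I_n -> R :=
  fun u => - ((fA A als u - g u) / norm2 (fun w => fA A als w - g w)).

Lemma dual_point_optimal als :
  in_cube als -> (forall al, in_cube al -> Psi A g als <= Psi A g al) ->
  [/\ norm2 (dual_point als) <= 1,
      Q1 A (dual_point als) - inner (dual_point als) g =
        - norm2 (fun u => fA A als u - g u) &
      forall y, norm2 y <= 1 ->
        Q1 A (dual_point als) - inner (dual_point als) g <= Q1 A y - inner y g].
Proof.
move=> cube_s min; set w := fun u => fA A als u - g u; set W := norm2 w.
have W0 : 0 <= W := norm2_ge0 _.
have ysE : dual_point als = (fun u => - W^-1 * w u).
  by apply: funext => u; rewrite /dual_point mulNr mulrC.
have norm_ys : norm2 (dual_point als) = W^-1 * W.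
  by rewrite ysE norm2_scale normrN ger0_norm ?invr_ge0.
have lower y : norm2 y <= 1 -> - W <= Q1 A y - inner y g.
  move=> y1; apply: le_trans (dual_lower_bound y cube_s).
  by rewrite -/w -/W lerN2 ler_piMl.
have value : Q1 A (dual_point als) - inner (dual_point als) g = - W.
  apply/eqP; rewrite eq_le; apply/andP; split; last first.
    have := dual_lower_bound (dual_point als) cube_s.
    by rewrite norm_ys -/w -/W -mulrA -expr2 invr_mul_sqr.
  have [al' cube' <-] := Q1_attained (dual_point als).
  rewrite -innerBr ysE innerZl mulNr lerN2.
  have -> : (fun u => fA A al' u - g u) = (fun u => (fA A al' u - fA A als u) + w u).
    by apply: funext => u; rewrite /w addrA subrK.
  rewrite innerDr inner_self mulrDr invr_mul_sqr lerDr mulr_ge0 ?invr_ge0 //.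
  exact: Psi_min_variational.
split => [|//|y y1]; first by rewrite norm_ys invr_mul_le1.
by rewrite value lower.
Qed.

Import numFieldNormedType.Exports ArrowAsProduct.

Lemma Psi_continuous : continuous (Psi A g).
Proof.
pose k e u := fA_lin (edge_delta e) u.
pose h u (al : EdgeIdx A -> R) := fA A (fun _ => 0) u - g u + \sum_e al e * k e u.
have -> : Psi A g = fun al => \sum_u h u al ^+ 2.
  apply: funext => al; rewrite /Psi sqr_norm2; apply: eq_bigr => u _.
  have al_shift : al = (fun e => 0 + al e) by apply: funext => e; rewrite add0r.
  by rewrite {1}al_shift fA_add fA_lin_delta /h addrAC.
apply: continuous_big => [|u _]; first exact: add_continuous.
have ch : continuous (h u).
  rewrite /h; move: (fA A _ u - g u) => c al.
  apply: continuousD; first exact: cst_continuous.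
  apply: continuous_big => [|e _]; first exact: add_continuous.
  by move=> be; apply: continuousM; [exact: proj_continuous|exact: cst_continuous].
by move=> al; exact: continuousM (ch al) (ch al).
Qed.

Lemma cube_compact (I : finType) : compact [set x : I -> R | in_cube x]%classic.
Proof.
exact: (@tychonoff I (fun _ => R) (fun _ => `[0, 1]%classic) (fun _ => @segment_compact R 0 1)).
Qed.

Lemma Psi_has_min :
  exists2 als, in_cube als & forall al, in_cube al -> Psi A g als <= Psi A g al.
Proof.
have cube_ne : ([set x : EdgeIdx A -> R | in_cube x] !=set0)%classic.
  by exists (fun _ => 0) => e; rewrite lexx ler01.
have [als cube_s min] := compact_EVT_min cube_ne (@cube_compact (EdgeIdx A))
  (continuous_subspaceT Psi_continuous).
by exists als => [|al cube_a]; [move: cube_s; rewrite inE | apply: min; rewrite inE].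
Qed.

End EdgeVariables.

Unset Implicit Arguments.

Theorem theorem3 (R : realType) (n : nat) (A : 'M[R]_n) (g : 'I_n -> R)
  (A_nonneg : forall u v, 0 <= A u v) (A_noloop : forall u, A u u = 0) :
  (* (a) *)
  (exists y0 : 'I_n -> R, exists al0 : EdgeIdx A -> R,
     [/\ norm2 y0 <= 1,
         (forall y, norm2 y <= 1 -> Q1 A y0 - inner y0 g <= Q1 A y - inner y g),
         in_cube al0,
         (forall al, in_cube al ->
            norm2 (fun u => fA A al0 u - g u) <= norm2 (fun u => fA A al u - g u)) &
         Q1 A y0 - inner y0 g = - norm2 (fun u => fA A al0 u - g u)])
  /\
  (* (b) *)
  (forall als : EdgeIdx A -> R,
     in_cube als ->
     (forall al, in_cube al -> Psi A g als <= Psi A g al) ->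
     (fun u => fA A als u) <> g ->
     let ys := fun u => - ((fA A als u - g u) / norm2 (fun w => fA A als w - g w)) in
     norm2 ys <= 1 /\
     (forall y, norm2 y <= 1 -> Q1 A ys - inner ys g <= Q1 A y - inner y g))
  /\
  (* (c) *)
  (forall al be : EdgeIdx A -> R,
     norm2 (fun e => grad (Psi A g) al e - grad (Psi A g) be e)
       <= Lconst A * norm2 (fun e => al e - be e)).
Proof.
split; last split.
- have [als cube_s min] := Psi_has_min A g.
  have [ys1 value opt] := dual_point_optimal A_nonneg cube_s min.
  exists (dual_point g als), als; split => // al cube_a.
  by have := min al cube_a; rewrite /Psi ler_pXn2r ?nnegrE ?norm2_ge0.
- move=> als cube_s min _ ys.
  by have [ys1 _ opt] := dual_point_optimal A_nonneg cube_s min.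
- exact: grad_Psi_lipschitz.
Qed.
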